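(* Let $q$ be an odd prime power and $m\geq 2$. Then the largest odd coset leader modulo $q^m-1$ is $\delta_1=(q-1)q^{m-1}-1$.
   Context: For $0\leq i\leq q^m-2$, the $q$-cyclotomic coset of $i$ modulo $q^m-1$ is $\{i,iq,iq^2,\ldots\}\bmod (q^m-1)$, and its smallest element is its coset leader. An odd coset leader is a coset leader that is an odd integer. *)

From mathcomp Require Export all_boot.
Set Implicit Arguments. Unset Strict Implicit. Unset Printing Implicit Defensive.

Definition prime_power (q : nat) : Prop :=
  exists p k : nat, prime p /\ 0 < k /\ q = p ^ k.

Definition cyclotomic_coset (q m i : nat) : nat -> Prop :=
  fun x => exists j : nat, x = (i * q ^ j) %% (q ^ m - 1).

Definition coset_leader (q m i : nat) : Prop :=
  i <= q ^ m - 2 /\ (forall x, cyclotomic_coset q m i x -> i <= x).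

(* With n = q^m - 1, the map i |-> n - i sends the coset of i to the coset
   of n - i (away from 0), so i is a coset leader exactly when n - i is the
   largest element of its coset.  The coset of q^(m-1) consists of the powers
   q^r with r < m, so its largest element is q^(m-1) and n - q^(m-1) = delta1
   is a leader.  Conversely, any 0 < c < q^(m-1) can be multiplied by a power
   of q into [q^(m-1), n), so n - c is not a leader. *)

From mathcomp Require Import all_boot.
From mathcomp Require Import zify.

Set Implicit Arguments.
Unset Strict Implicit.
Unset Printing Implicit Defensive.

Lemma modn_complM n x a :
  x <= n -> (x * a) %% n != 0 -> ((n - x) * a) %% n = n - (x * a) %% n.
Proof.
move=> le_xn nz_xa.
have n_gt0 : 0 < n by case: n le_xn nz_xa => // /[!leqn0] /eqP ->.
rewrite mulnBl modnB ?leq_mul2r ?le_xn ?orbT // modnMr.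
by rewrite lt0n nz_xa mul1n addn0.
Qed.

Lemma prime_power_gt1 q : prime_power q -> 1 < q.
Proof.
move=> [p [k [p_prime [k_gt0 ->]]]].
apply: leq_trans (prime_gt1 p_prime) _.
by rewrite -{1}(expn1 p) leq_exp2l ?prime_gt1.
Qed.

Section PowersModPred.

Variables q m : nat.
Hypotheses (q_gt1 : 1 < q) (m_ge2 : 2 <= m).

Lemma expnS_pred : q ^ m = q * q ^ (m - 1).
Proof. by rewrite -expnS; congr (_ ^ _); lia. Qed.

Lemma expn_pred_gt0 : 0 < q ^ (m - 1).
Proof. by rewrite expn_gt0 ltnW. Qed.

Lemma expn_pred_lt_pred : q ^ (m - 1) < q ^ m - 1.
Proof.
have : q ^ 1 <= q ^ (m - 1) by rewrite leq_exp2l //; lia.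
by rewrite expnS_pred expn1; nia.
Qed.

Lemma expn_modn_pred k : (q ^ k) %% (q ^ m - 1) = q ^ (k %% m).
Proof.
have qm_mod : (q ^ m) %% (q ^ m - 1) = 1.
  have Q_gt0 := expn_pred_gt0; have Q_lt := expn_pred_lt_pred.
  by rewrite -{1}(@subnK 1 (q ^ m)) ?modnDl ?modn_small; lia.
rewrite {1}(divn_eq k m) expnD [_ * m]mulnC expnM.
rewrite -modnMml -(modnXm (k %/ m)) qm_mod exp1n.
rewrite modnMml mul1n; apply/modn_small/(leq_ltn_trans _ expn_pred_lt_pred).
by rewrite leq_exp2l //; have := ltn_pmod k (ltnW m_ge2); lia.
Qed.

Lemma expn_modn_pred_le k : (q ^ k) %% (q ^ m - 1) <= q ^ (m - 1).
Proof.
by rewrite expn_modn_pred leq_exp2l //; have := ltn_pmod k (ltnW m_ge2); lia.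
Qed.

Lemma ndvdn_pred_expn : ~~ (q %| q ^ m - 1).
Proof.
have q_dvd_qm : q %| q ^ m by apply: dvdn_exp (dvdnn q); apply: ltnW.
have qm_gt0 : 0 < q ^ m by rewrite expn_gt0 (ltnW q_gt1).
apply/negP=> /(dvdn_sub q_dvd_qm); rewrite subKn // dvdn1 => /eqP q1.
by move: q_gt1; rewrite q1.
Qed.

Lemma expn_scale_window c :
  0 < c < q ^ (m - 1) -> exists j, q ^ (m - 1) <= c * q ^ j < q ^ m - 1.
Proof.
move=> /andP[c_gt0 c_lt].
set t := trunc_log q c.
have lo_t := trunc_logP q_gt1 c_gt0; have hi_t := trunc_log_ltn c q_gt1.
have t_lt : t < m - 1.
  by rewrite -(ltn_exp2l _ _ q_gt1); exact: leq_ltn_trans c_lt.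
set j := m - 1 - t.
have split_lo : q ^ (m - 1) = q ^ t * q ^ j.
  by rewrite -expnD; congr (_ ^ _); lia.
have split_hi : q ^ m = q ^ t.+1 * q ^ j.
  by rewrite -expnD; congr (_ ^ _); lia.
have pow_gt0 : 0 < q ^ j by rewrite expn_gt0 (ltnW q_gt1).
exists j; apply/andP; split; first by rewrite split_lo leq_mul2r lo_t orbT.
have hi : c * q ^ j < q ^ m by rewrite split_hi ltn_mul2r hi_t pow_gt0.
(* j > 0, so q divides c * q ^ j but not q ^ m - 1. *)
have ne : c * q ^ j != q ^ m - 1.
  apply: contra ndvdn_pred_expn => /eqP <-.
  by rewrite dvdn_mull // dvdn_exp //; lia.
by move: hi ne; lia.
Qed.

Lemma coset_leader_compl_pow : coset_leader q m (q ^ m - 1 - q ^ (m - 1)).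
Proof.
have Q_lt := expn_pred_lt_pred; split; first by lia.
move=> _ [j ->].
have nz : (q ^ (m - 1) * q ^ j) %% (q ^ m - 1) != 0.
  by rewrite -expnD expn_modn_pred -lt0n expn_gt0 (ltnW q_gt1).
rewrite (@modn_complM _ _ _ (ltnW Q_lt) nz) -expnD.
by have := expn_modn_pred_le (m - 1 + j); lia.
Qed.

Lemma coset_leader_le_compl_pow i :
  coset_leader q m i -> i <= q ^ m - 1 - q ^ (m - 1).
Proof.
move=> [le_i leader_i]; rewrite leqNgt; apply/negP=> gt_i.
have Q_lt := expn_pred_lt_pred; have Q_gt0 := expn_pred_gt0.
have [c i_def] : exists c, i = q ^ m - 1 - c by exists (q ^ m - 1 - i); lia.
subst i; have c_bounds : 0 < c < q ^ (m - 1) by lia.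
have [j /andP[lo hi]] := expn_scale_window c_bounds.
have nz : (c * q ^ j) %% (q ^ m - 1) != 0 by rewrite modn_small; lia.
have c_le : c <= q ^ m - 1 by lia.
have := leader_i _ (ex_intro _ j erefl).
by rewrite (@modn_complM _ _ _ c_le nz) modn_small //; lia.
Qed.

End PowersModPred.

Theorem lemma16 (q m : nat) :
  prime_power q -> odd q -> 2 <= m ->
  let delta1 := (q - 1) * q ^ (m - 1) - 1 in
  [/\ odd delta1, coset_leader q m delta1 &
      forall i, coset_leader q m i -> odd i -> i <= delta1].
Proof.
move=> /prime_power_gt1 q_gt1 odd_q m_ge2 /=.
have Q_lt := expn_pred_lt_pred q_gt1 m_ge2.
have qm_gt0 : 0 < q ^ m by rewrite expn_gt0 (ltnW q_gt1).
have -> : (q - 1) * q ^ (m - 1) - 1 = q ^ m - 1 - q ^ (m - 1).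
  by rewrite (expnS_pred q_gt1 m_ge2); have := expn_pred_gt0 m q_gt1; nia.
split.
- by rewrite (oddB (ltnW Q_lt)) (oddB qm_gt0) !oddX odd_q !orbT.
- exact: coset_leader_compl_pow.
- by move=> i leader_i _; exact: coset_leader_le_compl_pow.
Qed.
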